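(* Let $r>0$ and $k\ge1$ be an integer. Let $\mathcal N=(G,\beta,r)$ be a multi-path network of length $k$ with nodes $v_0,\dots,v_k$, where every arc joins two consecutive nodes, and for $i=1,\dots,k$ let $A_i$ be the set of arcs joining $v_{i-1}$ and $v_i$. Let $s=v_0$, $t=v_k$, and let $(\pi,f)$ be a potential-based $(s,t)$-flow of value $d>0$ in $\mathcal N$. If $\pi\in[0,\bar\pi]^V$ for some $\bar\pi>0$, then $$\frac{1}{k\sqrt[r]{k}}\sum_{i=1}^k\sum_{a\in A_i}\mu_a\geq\frac{d}{\sqrt[r]{\bar\pi}},$$ where $\mu_a=\beta_a^{-1/r}$.
   Context: A potential-based flow network $\mathcal N=(G,\beta,r)$ consists of a weakly connected directed multigraph $G=(V,A)$ without loops, resistances $\beta\in\mathbb{R}^A_{>0}$ and a degree $r>0$; the conductance of arc $a$ is $\mu_a=\beta_a^{-1/r}$. A potential-based $(s,t)$-flow of value $d$ is a pair $(\pi,f)\in\mathbb{R}^V\times\mathbb{R}^A$ with $\pi_u-\pi_v=\beta_a\,\mathrm{sign}(f_a)|f_a|^r$ for every arc $a=(u,v)$ and $\sum_{a\in\delta^+(v)}f_a-\sum_{a\in\delta^-(v)}f_a=b_v$ for all $v\in V$, where $b=d(\chi_s-\chi_t)$, $\chi_v$ the unit vector of $v$, and $\delta^+(v)$, $\delta^-(v)$ are the arcs leaving, resp. entering, $v$. *)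

From HB Require Import structures.
From mathcomp Require Import all_boot all_order all_algebra.
From mathcomp Require Import reals exp.
Set Implicit Arguments. Unset Strict Implicit. Unset Printing Implicit Defensive.
Import Order.TTheory GRing.Theory Num.Theory.
Local Open Scope ring_scope.

Definition conductance (R : realType) (r : R) (A : finType) (beta : A -> R)
  (a : A) : R := powR (beta a) (- r^-1).

Definition supply (R : realType) (V : finType) (s t : V) (d : R) (v : V) : R :=
  d * ((v == s)%:R - (v == t)%:R).

Definition potential_flow (R : realType) (V A : finType)
  (tail head : A -> V) (beta : A -> R) (r : R) (s t : V) (d : R)
  (pi : V -> R) (f : A -> R) : Prop :=
  (forall a : A, pi (tail a) - pi (head a) = beta a * (Num.sg (f a) * powR `|f a| r))
  /\ (forall v : V,
        \sum_(a | tail a == v) f a - \sum_(a | head a == v) f a = supply s t d v).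

Definition joins (k : nat) (A : finType) (tail head : A -> 'I_k.+1)
  (i : nat) (a : A) : bool :=
  ((tail a == i.-1 :> nat) && (head a == i :> nat)) ||
  ((tail a == i :> nat) && (head a == i.-1 :> nat)).

Definition multi_path_network (k : nat) (A : finType) (tail head : A -> 'I_k.+1)
  : Prop :=
  (forall a : A, exists i : nat, (1 <= i <= k)%N /\ joins tail head i a)
  (* weak connectivity: each consecutive pair is joined by some arc *)
  /\ (forall i : nat, (1 <= i <= k)%N -> exists a : A, joins tail head i a).

From HB Require Import structures.
From mathcomp Require Import all_boot all_order all_algebra.
From mathcomp Require Import reals exp lra ring zify.
Set Implicit Arguments. Unset Strict Implicit. Unset Printing Implicit Defensive.
Import Order.TTheory GRing.Theory Num.Theory.
Local Open Scope ring_scope.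

(* Cutting the path after v_j, only the arcs of A_(j+1) cross the cut, so by
   conservation they carry the whole value d forward.  The arc law makes the
   flow on each of them its conductance times the same signed r-th root of the
   potential drop D_j = pi(v_j) - pi(v_(j+1)); hence D_j = (d / C_j)^r, where
   C_j is the total conductance of A_(j+1).  The drops telescope to
   pi(s) - pi(t) <= pibar, and the convexity of y |-> (d / y)^r (its tangent
   at the mean of the C_j) turns sum_j (d / C_j)^r <= pibar into the bound. *)

Lemma sumr_gt0 (R : numDomainType) (I : finType) (x : I -> R) :
  (0 < #|I|)%N -> (forall i, 0 < x i) -> 0 < \sum_i x i.
Proof.
move=> /card_gt0P[i _] x_gt0; rewrite (bigD1 i) //= ltr_pwDl //.
by apply: sumr_ge0 => j _; apply/ltW.
Qed.

Lemma powR_inv_ge_tangent (R : realType) (r t : R) : 0 <= r -> 0 < t ->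
  1 + r - r * t <= powR t^-1 r.
Proof.
move=> r_ge0 t_gt0.
have ln_le : ln t <= t - 1.
  by have := @le_ln1Dx R (t - 1); rewrite (addrC 1) subrK; apply; lra.
rewrite /powR invr_eq0 gt_eqF // lnV ?posrE //; apply: le_trans (expR_ge1Dx _).
have : r * ln t <= r * (t - 1) by rewrite ler_wpM2l.
lra.
Qed.

Lemma powRK (R : realType) (r x : R) : r != 0 -> 0 <= x -> powR (powR x r) r^-1 = x.
Proof. by move=> r_neq0 x_ge0; rewrite -powRrM divff // powRr1. Qed.

Lemma powRVK (R : realType) (r x : R) : r != 0 -> 0 <= x -> powR (powR x r^-1) r = x.
Proof. by move=> r_neq0 x_ge0; rewrite -powRrM mulVf // powRr1. Qed.

Lemma powR_div_ge_tangent (R : realType) (r c m y : R) :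
  0 <= r -> 0 <= c -> 0 < m -> 0 < y ->
  powR (c / m) r * (1 + r - r * (y / m)) <= powR (c / y) r.
Proof.
move=> r_ge0 c_ge0 m_gt0 y_gt0.
have -> : c / y = c / m * (y / m)^-1 by rewrite invf_div mulrA divfK ?gt_eqF.
have cm_ge0 : 0 <= c / m by rewrite divr_ge0 // ltW.
have my_ge0 : 0 <= (y / m)^-1 by rewrite invr_ge0 ltW // divr_gt0.
rewrite [X in _ <= X]powRM // ler_wpM2l ?powR_ge0 //.
by rewrite powR_inv_ge_tangent ?divr_gt0.
Qed.

Lemma powR_div_mean_le (R : realType) (I : finType) (x : I -> R) (r c : R) :
  0 <= r -> 0 <= c -> (0 < #|I|)%N -> (forall i, 0 < x i) ->
  #|I|%:R * powR (c / ((\sum_i x i) / #|I|%:R)) r <= \sum_i powR (c / x i) r.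
Proof.
move=> r_ge0 c_ge0 I_gt0 x_gt0; set n : R := #|I|%:R; set S := \sum_i x i.
have n_gt0 : 0 < n by rewrite ltr0n.
have S_gt0 : 0 < S by exact: sumr_gt0.
have tangent i := powR_div_ge_tangent r_ge0 c_ge0 (divr_gt0 S_gt0 n_gt0) (x_gt0 i).
apply: le_trans (ler_sum _ (fun i (_ : true) => tangent i)).
rewrite -mulr_sumr sumrB sumr_const -mulr_sumr -mulr_suml -/S -[(1 + r) *+ _]mulr_natr.
rewrite (_ : #|xpredT| = #|I|) // -/n mulrC le_eqVlt; apply/orP; left.
by apply/eqP; congr (_ * _); field; rewrite !gt_eqF.
Qed.

Lemma sum_ge_of_sum_powR_div_le (R : realType) (I : finType) (x : I -> R) (r c P : R) :
  0 < r -> 0 <= c -> 0 < P -> (0 < #|I|)%N -> (forall i, 0 < x i) ->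
  \sum_i powR (c / x i) r <= P ->
  c / powR P r^-1 <= (#|I|%:R * powR #|I|%:R r^-1)^-1 * \sum_i x i.
Proof.
move=> r_gt0 c_ge0 P_gt0 I_gt0 x_gt0 sum_le.
have := le_trans (powR_div_mean_le (ltW r_gt0) c_ge0 I_gt0 x_gt0) sum_le.
set n : R := #|I|%:R; set S := \sum_i x i => mean_le.
have n_gt0 : 0 < n by rewrite ltr0n.
have S_gt0 : 0 < S by exact: sumr_gt0.
have cm_ge0 : 0 <= c / (S / n) by rewrite divr_ge0 // ltW // divr_gt0.
have nr_gt0 : 0 < powR n r^-1 by rewrite powR_gt0.
have Pr_gt0 : 0 < powR P r^-1 by rewrite powR_gt0.
have rV_ge0 : 0 <= r^-1 by rewrite invr_ge0 ltW.
have lhs_ge0 : n * powR (c / (S / n)) r \in Num.nneg.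
  by rewrite nnegrE mulr_ge0 ?powR_ge0 ?ltW.
have P_ge0 : P \in Num.nneg by rewrite nnegrE ltW.
have := ge0_ler_powR rV_ge0 lhs_ge0 P_ge0 mean_le.
rewrite (@powRM R n) ?powR_ge0 ?(ltW n_gt0) //.
rewrite powRK ?gt_eqF // mulrA ler_pdivrMr ?divr_gt0 // => root_le.
have -> : (n * powR n r^-1)^-1 * S = S / n / powR n r^-1.
  by field; rewrite !gt_eqF.
by rewrite ler_pdivrMr // mulrAC ler_pdivlMr // mulrC (mulrC (S / n)).
Qed.

(* The inverse of x |-> sg x * |x|^r, so that the arc law reads
   f_a = signed_root r (pi_u - pi_v) * mu_a. *)
Definition signed_root (R : realType) (r x : R) : R := Num.sg x * powR `|x| r^-1.

Lemma signed_rootN (R : realType) (r x : R) : signed_root r (- x) = - signed_root r x.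
Proof. by rewrite /signed_root sgrN normrN mulNr. Qed.

Lemma gt0_signed_root (R : realType) (r x : R) : 0 < x -> signed_root r x = powR x r^-1.
Proof. by move=> x_gt0; rewrite /signed_root gtr0_sg // gtr0_norm // mul1r. Qed.

Lemma signed_root_gt0 (R : realType) (r x : R) : (0 < signed_root r x) = (0 < x).
Proof.
rewrite /signed_root; case: (ltrgtP x 0) => [x_lt0|x_gt0|->].
- by rewrite ltr0_sg // mulN1r oppr_gt0 ltNge powR_ge0.
- by rewrite gtr0_sg // mul1r powR_gt0 // normr_gt0 gt_eqF.
- by rewrite sgr0 mul0r ltxx.
Qed.

Lemma arc_lawK (R : realType) (r beta g : R) : 0 < r -> 0 < beta ->
  g = signed_root r (beta * (Num.sg g * powR `|g| r)) * powR beta (- r^-1).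
Proof.
move=> r_gt0 beta_gt0; have [->|g_neq0] := eqVneq g 0.
  by rewrite /signed_root sgr0 !mul0r mulr0 sgr0 !mul0r.
have gr_gt0 : 0 < powR `|g| r by rewrite powR_gt0 // normr_gt0.
rewrite /signed_root sgrM gtr0_sg // sgrM (gtr0_sg gr_gt0) !mul1r mulr1.
rewrite normrM gtr0_norm // normrM normr_sg g_neq0 mul1r gtr0_norm //.
rewrite powRM ?ltW // powRK ?gt_eqF // powRN.
by rewrite sgr_id mulrCA mulrC mulKf ?gt_eqF ?powR_gt0 // -numEsg.
Qed.

Lemma flow_across_cut (R : realType) (V A : finType) (tail head : A -> V)
  (f : A -> R) (s t : V) (d : R) (S : pred V) :
  (forall v, \sum_(a | tail a == v) f a - \sum_(a | head a == v) f a = supply s t d v) ->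
  S s -> ~~ S t ->
  \sum_a f a * ((S (tail a))%:R - (S (head a))%:R) = d.
Proof.
move=> conservation S_s notS_t.
have sum_fibers (p : A -> V) :
    \sum_(v | S v) \sum_(a | p a == v) f a = \sum_a f a * (S (p a))%:R.
  transitivity (\sum_(a | S (p a)) f a).
    rewrite (partition_big p S) //; apply: eq_bigr => v Sv.
    by apply: eq_bigl => a; case: eqP => [->|]; rewrite ?Sv ?andbF.
  by rewrite big_mkcond; apply: eq_bigr => a _; case: (S (p a)); rewrite ?mulr1 ?mulr0.
under eq_bigr do rewrite mulrBr.
rewrite sumrB -!sum_fibers -sumrB (eq_bigr _ (fun v _ => conservation v)).
have s_neq_t : s == t = false by apply: contraNF notS_t => /eqP <-.
rewrite (bigD1 s) //= big1 => [|v /andP[Sv /negbTE v_neq_s]].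
  by rewrite /supply eqxx s_neq_t subr0 mulr1 addr0.
have v_neq_t : v == t = false by apply: contraNF notS_t => /eqP <-.
by rewrite /supply v_neq_s v_neq_t subrr mulr0.
Qed.

Lemma joinsP (k : nat) (A : finType) (tail head : A -> 'I_k.+1) (i : nat) (a : A) :
  reflect ((tail a = i.-1 :> nat /\ head a = i :> nat) \/
           (tail a = i :> nat /\ head a = i.-1 :> nat))
          (joins tail head i a).
Proof.
apply: (iffP orP).
  by case=> /andP[/eqP-> /eqP->]; [left|right].
by case=> -[-> ->]; rewrite !eqxx; [left|right].
Qed.

Section MultiPathNetwork.
Variables (R : realType) (r : R) (k : nat) (A : finType) (tail head : A -> 'I_k.+1).
Variables (beta : A -> R) (d : R) (pi : 'I_k.+1 -> R) (f : A -> R).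
Hypotheses (r_gt0 : 0 < r) (network : multi_path_network tail head).
Hypotheses (beta_gt0 : forall a, 0 < beta a) (d_gt0 : 0 < d).
Hypothesis flow : potential_flow tail head beta r ord0 ord_max d pi f.

Local Notation potential_drop j := (pi (inord j) - pi (inord j.+1)).
Local Notation layer_conductance j :=
  (\sum_(a | joins tail head j.+1 a) conductance r beta a).

Lemma flow_signed_root a :
  f a = signed_root r (pi (tail a) - pi (head a)) * conductance r beta a.
Proof. by rewrite flow.1; apply: arc_lawK. Qed.

Lemma cut_outside_layer (j : nat) a : ~~ joins tail head j.+1 a ->
  (tail a <= j)%N = (head a <= j)%N.
Proof.
move=> not_in_layer; have [i [/andP[i_ge1 _] joins_i]] := network.1 a.
have i_neq : i != j.+1 by apply: contraNneq not_in_layer => <-.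
by case/joinsP: joins_i => -[-> ->]; move: i_neq; lia.
Qed.

(* (tail a <= j) - (head a <= j) is the orientation of a with respect to the
   cut {v_0, ..., v_j}: 1 forward, -1 backward, 0 if a does not cross it. *)
Lemma layer_flow (j : nat) a : (j < k)%N -> joins tail head j.+1 a ->
  f a * ((tail a <= j)%N%:R - (head a <= j)%N%:R) =
  signed_root r (potential_drop j) * conductance r beta a.
Proof.
move=> j_lt_k /joinsP [] [tail_a head_a]; rewrite flow_signed_root.
- have -> : inord j = tail a by apply: val_inj; rewrite /= inordK ?tail_a //; lia.
  have -> : inord j.+1 = head a by apply: val_inj; rewrite /= inordK ?head_a //; lia.
  by rewrite tail_a head_a leqnn ltnn subr0 mulr1.
- have -> : inord j = head a by apply: val_inj; rewrite /= inordK ?head_a //; lia.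
  have -> : inord j.+1 = tail a by apply: val_inj; rewrite /= inordK ?tail_a //; lia.
  by rewrite tail_a head_a leqnn ltnn sub0r mulrN1 -mulNr -signed_rootN opprB.
Qed.

Lemma layer_flow_sum (j : nat) : (j < k)%N ->
  signed_root r (potential_drop j) * layer_conductance j = d.
Proof.
move=> j_lt_k.
have cut : \sum_a f a * ((tail a <= j)%N%:R - (head a <= j)%N%:R) = d.
  apply: (flow_across_cut (S := fun v : 'I_k.+1 => (v <= j)%N) flow.2) => //.
  by rewrite -ltnNge.
rewrite -{}cut [RHS](bigID (joins tail head j.+1)) /=.
rewrite [X in _ = _ + X]big1 => [|a /cut_outside_layer ->].
  by rewrite addr0 mulr_sumr; apply: eq_bigr => a joins_a; rewrite layer_flow.
by rewrite subrr mulr0.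
Qed.

Lemma layer_conductance_gt0 (j : nat) : (j < k)%N -> 0 < layer_conductance j.
Proof.
move=> j_lt_k; rewrite lt_def sumr_ge0 ?andbT => [|a _]; last exact: powR_ge0.
apply/eqP => C_eq0; have := layer_flow_sum j_lt_k.
by rewrite C_eq0 mulr0 => d_eq0; move: d_gt0; rewrite -d_eq0 ltxx.
Qed.

Lemma potential_dropE (j : nat) : (j < k)%N ->
  potential_drop j = powR (d / layer_conductance j) r.
Proof.
move=> j_lt_k; have C_gt0 := layer_conductance_gt0 j_lt_k.
have root_eq : signed_root r (potential_drop j) = d / layer_conductance j.
  by rewrite -(layer_flow_sum j_lt_k) mulfK ?gt_eqF.
have drop_gt0 : 0 < potential_drop j by rewrite -(signed_root_gt0 r) root_eq divr_gt0.
by rewrite -root_eq gt0_signed_root // powRVK ?gt_eqF ?ltW.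
Qed.

Lemma sum_potential_drop : \sum_(j < k) potential_drop j = pi ord0 - pi ord_max.
Proof.
rewrite -(big_mkord xpredT (fun j => potential_drop j)).
rewrite (@telescope_sumr_eq _ 0 k (fun j => - pi (inord j))) //.
  have -> : inord k = ord_max :> 'I_k.+1 by apply: val_inj; rewrite /= inordK.
  have -> : inord 0 = ord0 :> 'I_k.+1 by apply: val_inj; rewrite /= inordK.
  by rewrite opprK addrC.
by move=> j _; rewrite opprK addrC.
Qed.

Lemma sum_powR_div_layer_conductance :
  \sum_(j < k) powR (d / layer_conductance j) r = pi ord0 - pi ord_max.
Proof. by rewrite -sum_potential_drop; apply: eq_bigr => j _; rewrite potential_dropE. Qed.

End MultiPathNetwork.

Theorem theorem2 (R : realType) (r : R) (k : nat) (A : finType)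
  (tail head : A -> 'I_k.+1) (beta : A -> R) (d pibar : R)
  (pi : 'I_k.+1 -> R) (f : A -> R) :
  0 < r -> (1 <= k)%N ->
  multi_path_network tail head ->
  (forall a, 0 < beta a) ->
  0 < d ->
  potential_flow tail head beta r ord0 ord_max d pi f ->
  0 < pibar ->
  (forall v, 0 <= pi v <= pibar) ->
  (k%:R * powR k%:R r^-1)^-1 *
    \sum_(i < k) \sum_(a | joins tail head i.+1 a) conductance r beta a
  >= d / powR pibar r^-1.
Proof.
move=> r_gt0 k_ge1 network beta_gt0 d_gt0 flow pibar_gt0 pi_range.
have C_gt0 (j : 'I_k) :=
  layer_conductance_gt0 r_gt0 network beta_gt0 d_gt0 flow (ltn_ord j).
rewrite -[k in k%:R]card_ord.
apply: (sum_ge_of_sum_powR_div_le r_gt0 (ltW d_gt0) pibar_gt0 _ C_gt0).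
  by rewrite card_ord.
rewrite (sum_powR_div_layer_conductance r_gt0 network beta_gt0 d_gt0 flow).
by have := pi_range ord0; have := pi_range ord_max; lra.
Qed.
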